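(* Let $\mathsf V$ be a quantale, $X=(X,a)$ a $\mathsf V$-category and $s=(x_n)_{n\in\mathbb N}$ a Cauchy sequence in $X$. Put $\widetilde s=(x_n^* )_{n\in\mathbb N}$, a sequence in $[X^{\mathrm{op}},\mathsf V]$. Then $\widetilde s$ converges to $\psi_s$ in $[X^{\mathrm{op}},\mathsf V]$. If moreover $k=\top$ is the top element of $\mathsf V$, then for every $\psi\in[X^{\mathrm{op}},\mathsf V]$, if $\widetilde s$ converges to $\psi$ then $\psi=\psi_s$.
   Context: A quantale $(\mathsf V,\otimes,k)$ is a complete anti-symmetric lattice with an associative, commutative operation $\otimes$ with neutral element $k$ distributing over arbitrary suprema; $\hom(u,-)$ is the right adjoint of $u\otimes-$. A $\mathsf V$-category $(X,a)$ is a set with $a:X\times X\to\mathsf V$ such that $k\le a(x,x)$ and $a(x,y)\otimes a(y,z)\le a(x,z)$. $[X^{\mathrm{op}},\mathsf V]$ is the $\mathsf V$-category whose elements are the maps $\psi:X\to\mathsf V$ with $a(x,x')\otimes\psi(x')\le\psi(x)$ (i.e. $\mathsf V$-modules $X\rightharpoonup E$), with structure $[\psi,\psi']=\bigwedge_{x\in X}\hom(\psi(x),\psi'(x))$. For $x\in X$, $x^*\in[X^{\mathrm{op}},\mathsf V]$ is $y\mapsto a(y,x)$. For a sequence $s=(x_n)$: $\mathrm{Cauchy}(s)=\bigvee_N\bigwedge_{n,m\ge N}a(x_n,x_m)$, $s$ is Cauchy if $k\le\mathrm{Cauchy}(s)$; $\psi_s(y)=\bigvee_N\bigwedge_{n\ge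 N}a(y,x_n)$. In a $\mathsf V$-category $(Z,c)$, for $M\subseteq Z$, $\overline M=\{z\mid k\le\bigvee_{y\in M}c(z,y)\otimes c(y,z)\}$, and a sequence $(z_n)$ converges to $z$ if $z\in\overline{\{z_n\mid n\in M\}}$ for every infinite $M\subseteq\mathbb N$. *)

From Stdlib Require Import Arith.

Record quantale := Quantale {
  qT :> Type;
  qle : qT -> qT -> Prop;
  qsup : (qT -> Prop) -> qT;
  qtens : qT -> qT -> qT;
  qk : qT;
  qle_refl : forall x, qle x x;
  qle_trans : forall x y z, qle x y -> qle y z -> qle x z;
  qle_antisym : forall x y, qle x y -> qle y x -> x = y;
  qsup_ub : forall (S : qT -> Prop) x, S x -> qle x (qsup S);
  qsup_least : forall (S : qT -> Prop) y,
      (forall x, S x -> qle x y) -> qle (qsup S) y;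
  qtensA : forall x y z, qtens x (qtens y z) = qtens (qtens x y) z;
  qtensC : forall x y, qtens x y = qtens y x;
  qtens1 : forall x, qtens qk x = x;
  qtens_sup : forall u (S : qT -> Prop),
      qtens u (qsup S) = qsup (fun v => exists w, S w /\ v = qtens u w)
}.

Arguments qle {V} : rename.
Arguments qsup {V} : rename.
Arguments qtens {V} : rename.
Arguments qk V : rename.

Section Quantale.
Variable V : quantale.

Definition qsupI {I : Type} (f : I -> V) : V :=
  qsup (fun v => exists i, v = f i).
Definition qinf (S : V -> Prop) : V :=
  qsup (fun y => forall x, S x -> qle y x).
Definition qinfI {I : Type} (f : I -> V) : V :=
  qinf (fun v => exists i, v = f i).
Definition qtop : V := qsup (fun _ => True).

(* hom(u,-): right adjoint of u (x) -  *)
Definition qhom (u v : V) : V := qsup (fun w => qle (qtens u w) v).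

Definition is_Vcat {X : Type} (a : X -> X -> V) : Prop :=
  (forall x, qle (qk V) (a x x)) /\
  (forall x y z, qle (qtens (a x y) (a y z)) (a x z)).

(* elements of [X^op, V]: maps psi with a(x,x') (x) psi(x') <= psi(x) *)
Definition is_module {X : Type} (a : X -> X -> V) (psi : X -> V) : Prop :=
  forall x x', qle (qtens (a x x') (psi x')) (psi x).

(* the V-category structure of [X^op, V] *)
Definition presheaf_hom {X : Type} (psi psi' : X -> V) : V :=
  qinfI (fun x : X => qhom (psi x) (psi' x)).

(* x^* : y |-> a(y,x) *)
Definition rep {X : Type} (a : X -> X -> V) (x : X) : X -> V :=
  fun y => a y x.

Definition Cauchy_val {X : Type} (a : X -> X -> V) (s : nat -> X) : V :=
  qsupI (fun N : nat =>
    qinf (fun v => exists n m, N <= n /\ N <= m /\ v = a (s n) (s m))).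
Definition is_Cauchy {X : Type} (a : X -> X -> V) (s : nat -> X) : Prop :=
  qle (qk V) (Cauchy_val a s).

Definition psi_s {X : Type} (a : X -> X -> V) (s : nat -> X) : X -> V :=
  fun y => qsupI (fun N : nat =>
    qinf (fun v => exists n, N <= n /\ v = a y (s n))).

Definition closure {Z : Type} (c : Z -> Z -> V) (M : Z -> Prop) (z : Z) : Prop :=
  qle (qk V) (qsup (fun v => exists y, M y /\ v = qtens (c z y) (c y z))).

Definition infinite_nat (M : nat -> Prop) : Prop :=
  forall N, exists n, N <= n /\ M n.

Definition converges {Z : Type} (c : Z -> Z -> V) (z : nat -> Z) (l : Z) : Prop :=
  forall M : nat -> Prop, infinite_nat M ->
    closure c (fun y => exists n, M n /\ y = z n) l.

End Quantale.

Arguments qtop V : clear implicits.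

(* The tails c_N := /\_{n,m >= N} a(x_n, x_m) increase with N and their supremum lies above k.
   Composing through x_n shows c_N <= [x_n^*, psi_s] and c_N <= [psi_s, x_n^*] for n >= N, so
   every infinite set of indices meets a tail where x_n^* and psi_s are k-close in both
   directions. Conversely, when k is the top element every tail of a sequence converging to
   psi comes k-close to psi in each direction; the Yoneda inequality [x^*, psi] <= psi(x) then
   gives psi_s <= psi, and composing with the Cauchy tails gives psi <= psi_s. *)
From Stdlib Require Import Arith Lia FunctionalExtensionality.

Section QuantaleFacts.
Variable V : quantale.

Lemma qle_sup (S : V -> Prop) (x y : V) : S x -> qle y x -> qle y (qsup S).
Proof. intros Sx yx. apply (qle_trans _ _ _ _ yx), qsup_ub, Sx. Qed.

Lemma qinf_glb (S : V -> Prop) (y : V) : (forall x, S x -> qle y x) -> qle y (qinf V S).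
Proof. intros H. apply qsup_ub, H. Qed.

Lemma qinf_lb (S : V -> Prop) (x : V) : S x -> qle (qinf V S) x.
Proof. intros Sx. apply qsup_least. intros y Hy. apply Hy, Sx. Qed.

Lemma qtens_monor (u y z : V) : qle y z -> qle (qtens u y) (qtens u z).
Proof.
  intros yz.
  assert (z_sup : z = qsup (fun w => w = y \/ w = z)).
  { apply qle_antisym.
    - apply qsup_ub. now right.
    - apply qsup_least. intros x [-> | ->]; [exact yz | apply qle_refl]. }
  rewrite z_sup, qtens_sup. apply qsup_ub. exists y. auto.
Qed.

Lemma qtens_mono (u v y z : V) : qle u v -> qle y z -> qle (qtens u y) (qtens v z).
Proof.
  intros uv yz. apply (qle_trans _ _ (qtens u z)); [now apply qtens_monor|].
  rewrite (qtensC _ u), (qtensC _ v). now apply qtens_monor.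
Qed.

Lemma qtens_supr_le (u : V) (S : V -> Prop) (v : V) :
  (forall w, S w -> qle (qtens u w) v) -> qle (qtens u (qsup S)) v.
Proof. intros H. rewrite qtens_sup. apply qsup_least. intros x [w [Sw ->]]. auto. Qed.

Lemma qtens_supl_le (u : V) (S : V -> Prop) (v : V) :
  (forall w, S w -> qle (qtens w u) v) -> qle (qtens (qsup S) u) v.
Proof.
  intros H. rewrite qtensC. apply qtens_supr_le. intros w Sw. rewrite qtensC. auto.
Qed.

Lemma qhom_adj (u w v : V) : qle (qtens u w) v <-> qle w (qhom V u v).
Proof.
  split; intros H.
  - apply qsup_ub, H.
  - apply (qle_trans _ _ (qtens u (qhom V u v))); [now apply qtens_monor|].
    apply qtens_supr_le. auto.
Qed.

Lemma qle_of_k_le_sup (S : V -> Prop) (u v : V) :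
  qle (qk V) (qsup S) -> (forall w, S w -> qle (qtens u w) v) -> qle u v.
Proof.
  intros kS H. rewrite <- (qtens1 V u), qtensC.
  apply (qle_trans _ _ (qtens u (qsup S))); [now apply qtens_monor|].
  now apply qtens_supr_le.
Qed.

Lemma qk_le_supI_sq (f : nat -> V) :
  (forall N K, N <= K -> qle (f N) (f K)) ->
  qle (qk V) (qsupI V f) -> qle (qk V) (qsupI V (fun N => qtens (f N) (f N))).
Proof.
  intros f_mono kf. rewrite <- (qtens1 V (qk V)).
  apply (qle_trans _ _ (qtens (qsupI V f) (qsupI V f))); [now apply qtens_mono|].
  apply qtens_supl_le. intros w [N ->]. apply qtens_supr_le. intros w [N' ->].
  apply (qle_sup _ (qtens (f (max N N')) (f (max N N')))); [now exists (max N N')|].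
  apply qtens_mono; apply f_mono; lia.
Qed.

Lemma qtens_le_l_integral (u v : V) : qk V = qtop V -> qle (qtens u v) u.
Proof.
  intros k_top. rewrite <- (qtens1 V u) at 2. rewrite (qtensC V (qk V)).
  apply qtens_monor. rewrite k_top. now apply qsup_ub.
Qed.

Lemma converges_tails_integral {Z : Type} (c : Z -> Z -> V) (z : nat -> Z) (l : Z) :
  qk V = qtop V -> converges V c z l -> forall N,
    qle (qk V) (qsup (fun v => exists n, N <= n /\ v = c (z n) l)) /\
    qle (qk V) (qsup (fun v => exists n, N <= n /\ v = c l (z n))).
Proof.
  intros k_top conv N.
  assert (tail_infinite : infinite_nat (fun n => N <= n)).
  { intros N'. exists (max N N'). lia. }
  specialize (conv _ tail_infinite).
  split; apply (qle_trans _ _ _ _ conv), qsup_least; intros x [y [[n [Nn ->]] ->]];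
    apply (qle_sup _ _ _ (ex_intro _ n (conj Nn eq_refl))).
  - rewrite qtensC. now apply qtens_le_l_integral.
  - now apply qtens_le_l_integral.
Qed.

End QuantaleFacts.

Section Presheaves.
Variables (V : quantale) (X : Type) (a : X -> X -> V).

Lemma presheaf_hom_ge (psi psi' : X -> V) (w : V) :
  (forall x, qle (qtens (psi x) w) (psi' x)) -> qle w (presheaf_hom V psi psi').
Proof. intros H. apply qinf_glb. intros v [x ->]. now apply qhom_adj. Qed.

Lemma presheaf_hom_app (psi psi' : X -> V) (x : X) :
  qle (qtens (psi x) (presheaf_hom V psi psi')) (psi' x).
Proof. apply qhom_adj, qinf_lb. now exists x. Qed.

Lemma presheaf_hom_rep_le (psi : X -> V) (x : X) :
  is_Vcat V a -> is_module V a psi -> qle (presheaf_hom V (rep V a x) psi) (psi x).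
Proof.
  intros [a_refl _] psi_mod.
  apply (qle_trans _ _ (qtens (a x x) (presheaf_hom V (rep V a x) psi))).
  - rewrite <- (qtens1 V (presheaf_hom _ _ _)) at 1. apply qtens_mono; [apply a_refl | apply qle_refl].
  - exact (presheaf_hom_app (rep V a x) psi x).
Qed.

End Presheaves.

Section CauchySequence.
Variables (V : quantale) (X : Type) (a : X -> X -> V).
Hypothesis a_cat : is_Vcat V a.
Variable s : nat -> X.

Definition cauchy_tail (N : nat) : V :=
  qinf V (fun v => exists n m, N <= n /\ N <= m /\ v = a (s n) (s m)).

Lemma cauchy_tail_le (N n m : nat) : N <= n -> N <= m -> qle (cauchy_tail N) (a (s n) (s m)).
Proof. intros Nn Nm. apply qinf_lb. eauto. Qed.

Lemma cauchy_tail_mono (N K : nat) : N <= K -> qle (cauchy_tail N) (cauchy_tail K).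
Proof.
  intros NK. apply qinf_glb. intros x [n [m [Kn [Km ->]]]]. apply cauchy_tail_le; lia.
Qed.

Lemma psi_s_ge (y : X) (N : nat) (w : V) :
  (forall n, N <= n -> qle w (a y (s n))) -> qle w (psi_s V a s y).
Proof.
  intros H. apply (qle_sup _ _ _ _ (ex_intro _ N eq_refl)).
  apply qinf_glb. intros x [n [Nn ->]]. auto.
Qed.

Lemma psi_s_module : is_module V a (psi_s V a s).
Proof.
  destruct a_cat as [_ a_trans]. intros x x'.
  apply qtens_supr_le. intros w [N ->]. apply (psi_s_ge x N). intros n Nn.
  apply (qle_trans _ _ (qtens (a x x') (a x' (s n)))); [|apply a_trans].
  apply qtens_monor, qinf_lb. eauto.
Qed.

Lemma cauchy_tail_le_hom_psi_s (N n : nat) :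
  N <= n -> qle (cauchy_tail N) (presheaf_hom V (psi_s V a s) (rep V a (s n))).
Proof.
  destruct a_cat as [_ a_trans]. intros Nn. apply presheaf_hom_ge. intros x.
  apply qtens_supl_le. intros w [J ->]. unfold rep.
  apply (qle_trans _ _ (qtens (a x (s (max J N))) (a (s (max J N)) (s n)))); [|apply a_trans].
  apply qtens_mono.
  - apply qinf_lb. exists (max J N). split; [lia | reflexivity].
  - apply cauchy_tail_le; lia.
Qed.

Lemma cauchy_tail_le_hom_rep (N n : nat) :
  N <= n -> qle (cauchy_tail N) (presheaf_hom V (rep V a (s n)) (psi_s V a s)).
Proof.
  destruct a_cat as [_ a_trans]. intros Nn. apply presheaf_hom_ge. intros x.
  apply (psi_s_ge x N). intros m Nm. unfold rep.
  apply (qle_trans _ _ (qtens (a x (s n)) (a (s n) (s m)))); [|apply a_trans].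
  apply qtens_monor, cauchy_tail_le; lia.
Qed.

Lemma psi_s_le_of_tails (psi : X -> V) (y : X) :
  is_module V a psi ->
  (forall N, qle (qk V) (qsup (fun v => exists n, N <= n /\ v = presheaf_hom V (rep V a (s n)) psi))) ->
  qle (psi_s V a s y) (psi y).
Proof.
  intros psi_mod tails. apply qsup_least. intros w [N ->].
  apply (qle_of_k_le_sup _ _ _ _ (tails N)). intros w [n [Nn ->]].
  apply (qle_trans _ _ (qtens (a y (s n)) (psi (s n)))); [apply qtens_mono | apply psi_mod].
  - apply qinf_lb. eauto.
  - now apply presheaf_hom_rep_le.
Qed.

Hypothesis s_cauchy : is_Cauchy V a s.

Lemma rep_converges_psi_s :
  converges V (@presheaf_hom V X) (fun n => rep V a (s n)) (psi_s V a s).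
Proof.
  intros M M_inf.
  apply (qle_trans _ _ _ _ (qk_le_supI_sq _ _ cauchy_tail_mono s_cauchy)).
  apply qsup_least. intros w [N ->].
  destruct (M_inf N) as [n [Nn Mn]].
  apply (qle_sup _ _ _ _ (ex_intro _ (rep V a (s n)) (conj (ex_intro _ n (conj Mn eq_refl)) eq_refl))).
  apply qtens_mono; [apply cauchy_tail_le_hom_psi_s | apply cauchy_tail_le_hom_rep]; exact Nn.
Qed.

Lemma le_psi_s_of_tails (psi : X -> V) (y : X) :
  (forall N, qle (qk V) (qsup (fun v => exists n, N <= n /\ v = presheaf_hom V psi (rep V a (s n))))) ->
  qle (psi y) (psi_s V a s y).
Proof.
  destruct a_cat as [_ a_trans]. intros tails.
  apply (qle_of_k_le_sup _ _ _ _ s_cauchy). intros w [N ->].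
  apply (qle_of_k_le_sup _ _ _ _ (tails N)). intros w [m [Nm ->]].
  apply (psi_s_ge y N). intros n Nn.
  rewrite <- qtensA, (qtensC _ (cauchy_tail N)), qtensA.
  apply (qle_trans _ _ (qtens (a y (s m)) (a (s m) (s n)))); [|apply a_trans].
  apply qtens_mono; [exact (presheaf_hom_app V X psi (rep V a (s m)) y) | apply cauchy_tail_le; lia].
Qed.

End CauchySequence.

Theorem proposition3p17 (V : quantale) (X : Type) (a : X -> X -> V)
  (HX : is_Vcat V a) (s : nat -> X) (Hs : is_Cauchy V a s) :
  (is_module V a (psi_s V a s) /\
   converges V (@presheaf_hom V X) (fun n => rep V a (s n)) (psi_s V a s)) /\
  (qk V = qtop V ->
   forall psi : X -> V, is_module V a psi ->
     converges V (@presheaf_hom V X) (fun n => rep V a (s n)) psi ->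
     psi = psi_s V a s).
Proof.
  split; [split|].
  - exact (psi_s_module V X a HX s).
  - exact (rep_converges_psi_s V X a HX s Hs).
  - intros k_top psi psi_mod conv.
    pose proof (converges_tails_integral V _ _ _ k_top conv) as tails.
    extensionality y. apply qle_antisym.
    + apply le_psi_s_of_tails; [exact HX | exact Hs |]. intros N. apply (tails N).
    + apply psi_s_le_of_tails; [exact HX | exact psi_mod |]. intros N. apply (tails N).
Qed.
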